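(* For any positive integers $r,k$, the set $D_{r,k}$ contains at least one non-zero integer.
   Context: For positive integers $v,b,r,k$, a $(v,b,r,k)$-configuration is a connected bipartite graph with $v$ vertices on one side, each of degree $r$, and $b$ vertices on the other side, each of degree $k$, containing no cycle of length $4$. By convention the empty graph (with $v=b=0$) is also regarded as a configuration. A tuple $(v,b,r,k)$ is configurable if a $(v,b,r,k)$-configuration exists. Let $\mathbb{N}_0=\{0,1,2,\dots\}$ and define $$D_{r,k}=\left\{d\in\mathbb{N}_0:\left(d\tfrac{k}{\gcd(r,k)},\,d\tfrac{r}{\gcd(r,k)},\,r,\,k\right)\text{ is configurable}\right\}.$$ *)

From mathcomp Require Import all_boot.
Set Implicit Arguments. Unset Strict Implicit. Unset Printing Implicit Defensive.

(* A bipartite graph with point side 'I_v and line side 'I_b is given by its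
   incidence (edge) relation inc p l. *)

Definition bip_adj (v b : nat) (inc : 'I_v -> 'I_b -> bool) : rel ('I_v + 'I_b) :=
  fun x y => match x, y with
             | inl p, inr l => inc p l
             | inr l, inl p => inc p l
             | _, _ => false
             end.

Definition bip_connected (v b : nat) (inc : 'I_v -> 'I_b -> bool) : Prop :=
  forall x y : 'I_v + 'I_b, connect (bip_adj inc) x y.

(* No cycle of length 4: a 4-cycle in a bipartite graph consists of two distinct
   points p1 p2 and two distinct lines l1 l2, all four incidences holding. *)
Definition no_C4 (v b : nat) (inc : 'I_v -> 'I_b -> bool) : Prop :=
  forall (p1 p2 : 'I_v) (l1 l2 : 'I_b),
    p1 != p2 -> l1 != l2 -> ~ [&& inc p1 l1, inc p1 l2, inc p2 l1 & inc p2 l2].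

(* (v,b,r,k)-configuration. For v = b = 0 (the empty graph) the conditions are
   vacuous, matching the convention that the empty graph is a configuration. *)
Definition is_configuration (v b r k : nat) (inc : 'I_v -> 'I_b -> bool) : Prop :=
  [/\ forall p : 'I_v, #|[set l | inc p l]| = r,
      forall l : 'I_b, #|[set p | inc p l]| = k,
      no_C4 inc & bip_connected inc].

Definition configurable (v b r k : nat) : Prop :=
  exists inc : 'I_v -> 'I_b -> bool, is_configuration r k inc.

Definition in_D (r k d : nat) : Prop :=
  configurable (d * (k %/ gcdn r k)) (d * (r %/ gcdn r k)) r k.

(* If r = 1 or k = 1, a star (one line through k points, or one
   point on r lines) is a configuration with d = 1. Otherwise take a prime
   p > max(r, k). In the affine plane over F_p keep the points with abscissa
   in {0, ..., k - 1} and the lines y = s x + c with slope s in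
   {0, ..., r - 1}: every point lies on one line of each slope, every line
   meets each allowed abscissa once, two lines meet at most once, and the
   moves along slopes 0 and 1 connect everything. This gives k p points and
   r p lines, i.e. d = gcd(r, k) p. *)
From mathcomp Require Import all_boot all_algebra ring.
Import GRing.Theory.
Set Implicit Arguments. Unset Strict Implicit. Unset Printing Implicit Defensive.

Lemma homo_connect (A B : finType) (e : rel A) (e' : rel B) (f : A -> B) :
  {homo f : x y / e x y >-> e' x y} ->
  {homo f : x y / connect e x y >-> connect e' x y}.
Proof.
move=> homo_f x _ /connectP[s path_s ->]; apply/connectP.
by exists (map f s); [apply: homo_path path_s | rewrite last_map].
Qed.

Section FinConfiguration.
Variables (T U : finType) (inc : T -> U -> bool).

Definition inc_adj : rel (T + U) :=
  fun x y => match x, y with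
             | inl p, inr l | inr l, inl p => inc p l
             | _, _ => false
             end.

Definition fin_configuration (r k : nat) : Prop :=
  [/\ forall p, #|[set l | inc p l]| = r,
      forall l, #|[set p | inc p l]| = k,
      forall p1 p2 l1 l2, p1 != p2 -> l1 != l2 ->
        ~ [&& inc p1 l1, inc p1 l2, inc p2 l1 & inc p2 l2]
    & forall x y, connect inc_adj x y].

Lemma inc_adj_sym : symmetric inc_adj.
Proof. by do 2 case=> ?. Qed.

Lemma connected_of_hub (z : T + U) :
  (forall x, connect inc_adj x z) -> forall x y, connect inc_adj x y.
Proof.
move=> to_z x y; apply: connect_trans (to_z x) _.
by rewrite (sym_connect_sym inc_adj_sym).
Qed.

Lemma configurable_fin_configuration r k :
  fin_configuration r k -> configurable #|T| #|U| r k.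
Proof.
case=> deg_p deg_l noC4 conn.
exists (fun i j => inc (enum_val i) (enum_val j)); split.
- move=> p; rewrite -(deg_p (enum_val p)).
  rewrite -[RHS](on_card_preimset (onW_bij _ (enum_val_bij U))).
  by apply: eq_card => l; rewrite !inE.
- move=> l; rewrite -(deg_l (enum_val l)).
  rewrite -[RHS](on_card_preimset (onW_bij _ (enum_val_bij T))).
  by apply: eq_card => p; rewrite !inE.
- by move=> p1 p2 l1 l2; rewrite -!(inj_eq enum_val_inj); apply: noC4.
- pose rank (x : T + U) := match x with
    | inl p => inl (enum_rank p) | inr l => inr (enum_rank l) end.
  have rank_adj : {homo rank : x y / inc_adj x y >-> bip_adj
                   (fun i j => inc (enum_val i) (enum_val j)) x y}.
    by do 2 case=> ? //=; rewrite !enum_rankK.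
  have rank_onto x : x = rank (match x with
    | inl i => inl (enum_val i) | inr j => inr (enum_val j) end).
    by case: x => ? /=; rewrite enum_valK.
  by move=> x y; rewrite (rank_onto x) (rank_onto y); apply/homo_connect/conn.
Qed.

End FinConfiguration.

Lemma complete_configuration (T U : finType) (t0 : T) (u0 : U) :
  (#|T| <= 1) || (#|U| <= 1) ->
  fin_configuration (fun (_ : T) (_ : U) => true) #|U| #|T|.
Proof.
move=> small; split.
- by move=> _; apply: eq_card => l; rewrite inE.
- by move=> _; apply: eq_card => p; rewrite inE.
- move=> p1 p2 l1 l2; case/orP: small => /card_le1_eqP eq_all.
  + by rewrite (eq_all p1 p2) ?eqxx.
  + by rewrite (eq_all l1 l2) ?eqxx.
- apply: (@connected_of_hub _ _ _ (inl t0)) => [[p|l]].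
  + by apply: connect_trans (connect1 (y := inr u0) _) (connect1 _).
  + exact: connect1.
Qed.

Section AffinePlane.
Variables (p r k : nat).
Hypothesis prime_p : prime p.
Local Open Scope ring_scope.

Lemma lines_meet_once (R : idomainType) (s1 s2 c1 c2 x1 x2 : R) :
  s1 * x1 + c1 = s2 * x1 + c2 -> s1 * x2 + c1 = s2 * x2 + c2 ->
  s1 = s2 \/ x1 = x2.
Proof.
move=> e1 e2.
have : (s1 - s2) * (x1 - x2) = (s1 * x1 + c1 - (s2 * x1 + c2))
                               - (s1 * x2 + c1 - (s2 * x2 + c2)) by ring.
rewrite e1 e2 !subrr => /eqP; rewrite mulf_eq0 !subr_eq0.
by case/orP=> /eqP; [left | right].
Qed.

Lemma natr_Fp_inj (m n : nat) :
  (m < p)%N -> (n < p)%N -> ((m%:R : 'F_p) == n%:R) = (m == n).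
Proof.
move=> m_lt n_lt; apply/eqP/eqP => [|-> //].
by move/(congr1 val); rewrite /= !(val_Fp_nat prime_p) !modn_small.
Qed.

Definition affine_inc (P : 'I_k * 'F_p) (L : 'I_r * 'F_p) : bool :=
  P.2 == L.1%:R * P.1%:R + L.2.

Lemma affine_point_degree P : #|[set L | affine_inc P L]| = r.
Proof.
case: P => x y.
have -> : [set L | affine_inc (x, y) L] = [set (s, y - s%:R * x%:R) | s : 'I_r].
  apply/setP=> [[s c]]; rewrite inE /affine_inc /=.
  apply/eqP/imsetP => [->|[s' _ [-> ->]]]; last by rewrite addrC subrK.
  by exists s => //; rewrite addrC addKr.
by rewrite card_imset ?card_ord // => s1 s2 [].
Qed.

Lemma affine_line_degree L : #|[set P | affine_inc P L]| = k.
Proof.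
case: L => s c.
have -> : [set P | affine_inc P (s, c)] = [set (x, s%:R * x%:R + c) | x : 'I_k].
  apply/setP=> [[x y]]; rewrite inE /affine_inc /=.
  by apply/eqP/imsetP => [->|[x' _ [-> ->]]]; first exists x.
by rewrite card_imset ?card_ord // => x1 x2 [].
Qed.

Lemma affine_no_C4 P1 P2 L1 L2 : (r <= p)%N -> (k <= p)%N ->
  P1 != P2 -> L1 != L2 ->
  ~ [&& affine_inc P1 L1, affine_inc P1 L2, affine_inc P2 L1 & affine_inc P2 L2].
Proof.
case: P1 P2 L1 L2 => [x1 y1] [x2 y2] [s1 c1] [s2 c2] r_le k_le.
rewrite /affine_inc /= => neqP neqL /and4P[/eqP e11 /eqP e12 /eqP e21 /eqP e22].
have [eq_s|eq_x] :=
  lines_meet_once (etrans (esym e11) e12) (etrans (esym e21) e22).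
- move: eq_s => /eqP; rewrite natr_Fp_inj ?(leq_trans (ltn_ord _)) //.
  move=> /eqP/val_inj eq_s.
  by move: neqL; rewrite eq_s e12 in e11 *; rewrite (addrI _ e11) eqxx.
- move: eq_x => /eqP; rewrite natr_Fp_inj ?(leq_trans (ltn_ord _)) //.
  move=> /eqP/val_inj eq_x.
  by move: neqP; rewrite e11 e21 eq_x eqxx.
Qed.

Lemma affine_connected : (1 < r)%N -> (1 < k)%N ->
  forall u v, connect (inc_adj affine_inc) u v.
Proof.
move=> r_gt1 k_gt1; set e := inc_adj affine_inc.
pose x0 : 'I_k := Ordinal (ltnW k_gt1); pose x1 : 'I_k := Ordinal k_gt1.
pose s0 : 'I_r := Ordinal (ltnW r_gt1); pose s1 : 'I_r := Ordinal r_gt1.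
have common_line P Q L :
    affine_inc P L -> affine_inc Q L -> connect e (inl P) (inl Q).
  by move=> PL QL; apply: (connect_trans (y := inr L)); apply: connect1.
have to_axis x y : connect e (inl (x, y)) (inl (x0, y)).
  by apply: (common_line _ _ (s0, y)); rewrite /affine_inc /= mul0r add0r.
have axis_down y : connect e (inl (x0, y)) (inl (x0, y - 1)).
  apply: (connect_trans (y := inl (x1, y))).
    by apply: (common_line _ _ (s0, y)); rewrite /affine_inc /= !mul0r !add0r.
  apply: (common_line _ _ (s1, y - 1)); rewrite /affine_inc /= ?mulr0 ?add0r //.
  by rewrite mul1r addrC subrK.
have axis_shift y n : connect e (inl (x0, y)) (inl (x0, y - n%:R)).
  elim: n => [|n IH]; first by rewrite subr0 connect0.
  by apply: connect_trans IH _; rewrite -natr1 opprD addrA; apply: axis_down.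
(* 1 generates the additive group of F_p *)
have axis_to_origin y : connect e (inl (x0, y)) (inl (x0, 0)).
  by have := axis_shift y (val y); rewrite natr_Zp subrr.
apply: (connected_of_hub (z := inl (x0, 0))) => [[[x y]|[s c]]].
- exact: connect_trans (to_axis x y) (axis_to_origin y).
- apply: connect_trans (axis_to_origin c).
  by apply: connect1; rewrite /e /= /affine_inc /= mulr0 add0r.
Qed.

Lemma affine_configuration :
  (1 < r)%N -> (1 < k)%N -> (r <= p)%N -> (k <= p)%N ->
  fin_configuration affine_inc r k.
Proof.
move=> r_gt1 k_gt1 r_le k_le; split.
- exact: affine_point_degree.
- exact: affine_line_degree.
- by move=> *; apply: affine_no_C4.
- exact: affine_connected.
Qed.

End AffinePlane.

Lemma configurable_multiple r k : 0 < r -> 0 < k ->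
  exists2 m, 0 < m & configurable (k * m) (r * m) r k.
Proof.
move=> r_gt0 k_gt0.
have [r_le1 | r_gt1] := leqP r 1.
  have -> : r = 1 by apply/anti_leq/andP.
  exists 1 => //; rewrite !muln1.
  have := @complete_configuration 'I_k 'I_1 (Ordinal k_gt0) ord0.
  rewrite !card_ord orbT => /(_ isT)/configurable_fin_configuration.
  by rewrite !card_ord.
have [k_le1 | k_gt1] := leqP k 1.
  have -> : k = 1 by apply/anti_leq/andP.
  exists 1 => //; rewrite !muln1.
  have := @complete_configuration 'I_1 'I_r ord0 (Ordinal r_gt0).
  rewrite !card_ord => /(_ isT)/configurable_fin_configuration.
  by rewrite !card_ord.
have [p] := prime_above (maxn r k); rewrite gtn_max => /andP[r_lt k_lt] prime_p.
exists p; first exact: prime_gt0.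
have := affine_configuration prime_p r_gt1 k_gt1 (ltnW r_lt) (ltnW k_lt).
move/configurable_fin_configuration.
by rewrite !card_prod !card_ord (Fp_cast prime_p).
Qed.

Lemma in_D_gcd_mul r k m :
  configurable (k * m) (r * m) r k -> in_D r k (gcdn r k * m).
Proof.
by rewrite /in_D ![gcdn r k * m * _]mulnC !mulnA !divnK ?dvdn_gcdl ?dvdn_gcdr.
Qed.

Theorem lemma3 (r k : nat) : 0 < r -> 0 < k -> exists d : nat, 0 < d /\ in_D r k d.
Proof.
move=> r_gt0 k_gt0; have [m m_gt0 conf] := configurable_multiple r_gt0 k_gt0.
exists (gcdn r k * m); split; last exact: in_D_gcd_mul.
by rewrite muln_gt0 gcdn_gt0 r_gt0.
Qed.
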